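(* Let $q=p^e$ with $p$ prime, let $a\in\mathbb{F}_q^*$, and let $f(x)=(x-a)^k\in\mathbb{F}_q[x]$ with $k\ge1$. Then every $f$-subgroup $M$ (in the multiplicative group of any extension field of $\mathbb{F}_q$) equals $\langle a\rangle$, and $M$ is standard: every $f$-sequence presenting $M$ is cyclic with $s_{n+1}=a s_n$ for all $n\in\mathbb{Z}$.
   Context: An $f$-sequence is a two-way infinite sequence $(s_n)_{n\in\mathbb{Z}}$ with $f(\sigma)s=0$, where $(\sigma s)_n=s_{n+1}$. A sequence $s$ presents a finite multiplicative subgroup $M$ if $s$ has smallest period $|M|$ and $M=\{s_0,\ldots,s_{|M|-1}\}$; $M$ is an $f$-subgroup if some $f$-sequence presents it. A sequence is cyclic if $s_{n+1}/s_n$ is a constant. An $f$-subgroup is standard if every $f$-sequence presenting it is cyclic. *)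

From HB Require Import structures.
From mathcomp Require Import all_boot all_order all_algebra all_field.
Set Implicit Arguments. Unset Strict Implicit. Unset Printing Implicit Defensive.
Import Order.TTheory GRing.Theory Num.Theory.
Local Open Scope ring_scope.

Section Seqs.
Variable L : fieldType.

(* (f(sigma) s)_n = sum_i f_i s_{n+i}, where (sigma s)_n = s_{n+1}. *)
Definition poly_shift_apply (f : {poly L}) (s : int -> L) : int -> L :=
  fun n => \sum_(i < size f) f`_i * s (n + (i%:Z))%R.

Definition is_f_seq (f : {poly L}) (s : int -> L) : Prop :=
  forall n : int, poly_shift_apply f s n = 0.

Definition is_period (s : int -> L) (m : nat) : Prop :=
  forall n : int, s (n + (m%:Z))%R = s n.

Definition finite_mult_subgroup (M : seq L) : Prop :=
  [/\ uniq M, (0 : L) \notin M, (1 : L) \in M,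
      {in M &, forall x y, x * y \in M} & {in M, forall x, x^-1 \in M}].

Definition presents (s : int -> L) (M : seq L) : Prop :=
  [/\ is_period s (size M),
      (forall m : nat, (0 < m)%N -> (m < size M)%N -> ~ is_period s m) &
      M =i [seq s (i%:Z) | i <- iota 0 (size M)]].

Definition f_subgroup (f : {poly L}) (M : seq L) : Prop :=
  finite_mult_subgroup M /\ exists s, is_f_seq f s /\ presents s M.

Definition cyclic_seq (s : int -> L) : Prop :=
  exists c : L, forall n : int, s (n + 1)%R = c * s n.

Definition standard_subgroup (f : {poly L}) (M : seq L) : Prop :=
  f_subgroup f M /\ forall s, is_f_seq f s -> presents s M -> cyclic_seq s.

(* the cyclic subgroup <a> of L^* generated by a (of finite order here) *)
Definition in_cyclic_gen (a x : L) : Prop := exists n : nat, x = a ^+ n.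

End Seqs.

From HB Require Import structures.
From mathcomp Require Import all_boot all_order all_algebra all_field.
From mathcomp Require Import ring.
Import GRing.Theory.
Local Open Scope ring_scope.

(* Let b = iota a.  Over L the polynomial f is ('X - b)^k, and applying it to a
   sequence s is the k-fold iterate of the difference operator
   D_b s = (n |-> s (n + 1) - b * s n).

   1. Operator calculus: poly_shift_apply turns products by 'X - c into D_c.
   2. Periodic sequences: if u has a period m that is invertible in L and
      D_c (D_c u) = 0 with c != 0, then D_c u = 0 (D_c u is geometric, and
      u itself would grow linearly in n along the period otherwise).  Iterating,
      every periodic f-sequence satisfies s (n + 1) = b * s n.
   3. Finite subgroups of L^*: every element x satisfies x ^+ |M| = 1, and hence
      |M| is not divisible by the characteristic, i.e. |M| is invertible in L.
   4. A geometric sequence of ratio b presenting a subgroup M forces M = <b>. *)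

Section ShiftOperator.
Variable L : fieldType.

Definition shift_diff (c : L) (s : int -> L) : int -> L :=
  fun n => s (n + 1) - c * s n.

Lemma poly_shift_apply_widen (f : {poly L}) s n N : (size f <= N)%N ->
  poly_shift_apply f s n = \sum_(i < N) f`_i * s (n + i%:Z).
Proof.
move=> leN; rewrite /poly_shift_apply.
rewrite (big_ord_widen N (fun i => f`_i * s (n + i%:Z)) leN) big_mkcond /=.
apply: eq_bigr => i _; case: ifP => // /negbT; rewrite -leqNgt => le_f_i.
by rewrite nth_default // mul0r.
Qed.

Lemma poly_shift_apply_mulX (g : {poly L}) s n :
  poly_shift_apply ('X * g) s n = poly_shift_apply g s (n + 1).
Proof.
rewrite (@poly_shift_apply_widen ('X * g) s n (size g).+1); last first.
  by apply: leq_trans (size_polyMleq _ _) _; rewrite size_polyX.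
rewrite big_ord_recl coefXM eqxx mul0r add0r /poly_shift_apply.
by apply: eq_bigr => i _; rewrite coefXM /= intS addrA.
Qed.

Lemma poly_shift_apply_scale c (g : {poly L}) s n :
  poly_shift_apply (c *: g) s n = c * poly_shift_apply g s n.
Proof.
rewrite (@poly_shift_apply_widen (c *: g) s n (size g)); last exact: size_scale_leq.
by rewrite /poly_shift_apply mulr_sumr; apply: eq_bigr => i _; rewrite coefZ mulrA.
Qed.

Lemma poly_shift_apply_sub (g h : {poly L}) s n :
  poly_shift_apply (g - h) s n = poly_shift_apply g s n - poly_shift_apply h s n.
Proof.
set N := maxn (size g) (size h).
have leN : (size (g - h)%R <= N)%N.
  by apply: leq_trans (size_polyD _ _) _; rewrite size_polyN.
rewrite (@poly_shift_apply_widen _ s n _ leN) !(@poly_shift_apply_widen _ _ _ N)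
  ?leq_maxl ?leq_maxr // -sumrB.
by apply: eq_bigr => i _; rewrite coefB mulrBl.
Qed.

Lemma poly_shift_apply_XsubC (c : L) (g : {poly L}) s n :
  poly_shift_apply (('X - c%:P) * g) s n = shift_diff c (poly_shift_apply g s) n.
Proof.
by rewrite mulrBl mul_polyC poly_shift_apply_sub poly_shift_apply_mulX
  poly_shift_apply_scale.
Qed.

Lemma poly_shift_apply_XsubC_exp (c : L) k s n :
  poly_shift_apply (('X - c%:P) ^+ k) s n = iter k (shift_diff c) s n.
Proof.
elim: k n => [|k IHk] n.
  by rewrite expr0 /poly_shift_apply size_poly1 big_ord1 coef1 eqxx mul1r addr0.
by rewrite exprS poly_shift_apply_XsubC /= /shift_diff !IHk.
Qed.

End ShiftOperator.

Arguments shift_diff {L}.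

Section PeriodicSequences.
Variable L : fieldType.
Implicit Types (c : L) (s u v : int -> L).

(* D_c commutes with the shift, so it preserves periods. *)
Lemma shift_diff_period c u m : is_period u m -> is_period (shift_diff c u) m.
Proof. by move=> per n; rewrite /shift_diff -addrA (addrC m%:Z) addrA !per. Qed.

Lemma geometric_natE c v : (forall n, v (n + 1) = c * v n) ->
  forall i : nat, v i%:Z = c ^+ i * v 0.
Proof.
by move=> geo; elim=> [|i IHi]; rewrite ?mul1r // intS addrC geo IHi exprS mulrA.
Qed.

Lemma geometric_seqE c v : c != 0 -> (forall n, v (n + 1) = c * v n) ->
  forall n : int, v n = c ^ n * v 0.
Proof.
move=> c0 geo; elim/int_rec => [|n _|n IHn]; first by rewrite expr0z mul1r.
  exact: (@geometric_natE c v geo n.+1).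
have := geo (- n.+1%:Z); rewrite intS opprD addrAC subrr add0r IHn => e.
apply: (mulfI c0); rewrite -e mulrA; congr (_ * _).
by rewrite -{2}(expr1z c) -expfzDr // addrA subrr sub0r.
Qed.

(* The key step: for a sequence with an invertible period, the operator D_c
   (c != 0) has no Jordan block of size 2, i.e. D_c (D_c u) = 0 forces D_c u = 0.
   Writing v = D_c u = c ^ n * d, one gets c * u i = c ^+ i.+1 * u 0 + i c ^+ i d;
   periodicity of v gives c ^+ m = 1 unless d = 0, and then periodicity of u
   gives m d = 0. *)
Lemma periodic_shift_diff2 c m u : c != 0 -> m%:R != 0 :> L -> is_period u m ->
  (forall n, shift_diff c (shift_diff c u) n = 0) -> forall n, shift_diff c u n = 0.
Proof.
move=> c0 m0 per D2u0.
set v := shift_diff c u; set d := v 0.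
have geo : forall n, v (n + 1) = c * v n.
  by move=> n; apply/eqP; rewrite -subr_eq0; apply/eqP; apply: D2u0.
have vE := @geometric_seqE c v c0 geo.
have vnatE := @geometric_natE c v geo.
have uE : forall i : nat, c * u i%:Z = c ^+ i.+1 * u 0 + i%:R * c ^+ i * d.
  elim=> [|i IHi]; first by rewrite expr1 !mul0r addr0.
  have -> : u i.+1%:Z = v i%:Z + c * u i%:Z by rewrite /v /shift_diff intS addrC subrK.
  by rewrite mulrDr IHi vnatE -/d !exprS mulrS; ring.
suff d0 : d = 0 by move=> n; rewrite vE -/d d0 mulr0.
apply/eqP; apply: contraNT m0 => dn0.
have vm := @shift_diff_period c u m per 0; rewrite add0r -/v vnatE -/d in vm.
have cm : c ^+ m = 1.
  by apply: (mulIf dn0); rewrite mul1r.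
have um0 : u m%:Z = u 0 by rewrite -(per 0) add0r.
have um := uE m; rewrite um0 exprS cm !mulr1 in um.
have : m%:R * d = 0 by apply: (@addrI _ (c * u 0)); rewrite addr0 -um.
by move/eqP; rewrite mulf_eq0 (negbTE dn0) orbF.
Qed.

Lemma periodic_XsubC_exp_geometric c m k s :
  c != 0 -> m%:R != 0 :> L -> (0 < k)%N -> is_period s m ->
  is_f_seq (('X - c%:P) ^+ k) s -> forall n, s (n + 1) = c * s n.
Proof.
move=> c0 m0 k0 per fs n; apply/eqP; rewrite -subr_eq0; apply/eqP.
have iter_per j : is_period (iter j (shift_diff c) s) m.
  by elim: j => //= j IHj; apply: shift_diff_period.
rewrite -(prednK k0) in fs; elim: k.-1 fs n => [|j IHj] fs n.
  by have := fs n; rewrite poly_shift_apply_XsubC_exp.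
apply: IHj => n'; rewrite poly_shift_apply_XsubC_exp.
apply: (@periodic_shift_diff2 c m _ c0 m0 (iter_per j)) => n''.
by have := fs n''; rewrite poly_shift_apply_XsubC_exp.
Qed.

End PeriodicSequences.

Section FiniteSubgroups.
Variable L : fieldType.
Implicit Types (M : seq L) (x y : L).

Lemma prod_seq_mull x M : \prod_(y <- M) (x * y) = x ^+ size M * \prod_(y <- M) y.
Proof.
elim: M => [|y M IHM]; first by rewrite !big_nil mulr1.
by rewrite !big_cons IHM /= exprS; ring.
Qed.

(* Lagrange for a finite subgroup of L^*: multiplication by x permutes M, so
   comparing products gives x ^+ |M| = 1. *)
Lemma subgroup_exp_size M x : finite_mult_subgroup M -> x \in M -> x ^+ size M = 1.
Proof.
case=> uniqM M0 _ mulM invM xM.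
have x0 : x != 0 by apply: contraNneq M0 => <-.
have permM : perm_eq M [seq x * y | y <- M].
  apply: uniq_perm => //; first by rewrite map_inj_in_uniq // => y z _ _; apply: mulfI.
  move=> y; apply/idP/mapP => [yM|[z zM ->]]; last exact: mulM.
  by exists (x^-1 * y); [apply: mulM => //; apply: invM | rewrite mulVKf].
have := perm_big _ permM (F := id) (P := xpredT) (op := *%R) (x := 1).
rewrite big_map prod_seq_mull => prodE.
have prodM0 : \prod_(y <- M) y != 0.
  by rewrite prodf_seq_neq0; apply/allP => y yM /=; apply: contraNneq M0 => <-.
by apply: (mulIf prodM0); rewrite mul1r -prodE.
Qed.

(* In characteristic p the p-th power map is injective, so 1 has no other
   p-th roots. *)
Lemma pchar_exp_eq1 p y : p \in [pchar L] -> y ^+ p = 1 -> y = 1.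
Proof.
move=> pch yp1; have : (y - 1) ^+ p = 0.
  rewrite -(pFrobenius_autE pch) pFrobenius_autB_comm; last exact: commr1.
  by rewrite !pFrobenius_autE yp1 expr1n subrr.
by move/eqP; rewrite expf_eq0 subr_eq0 => /andP [_ /eqP].
Qed.

(* The order of a finite subgroup of L^* is prime to the characteristic: if
   |M| = p * m', all elements of M would be roots of 'X^m' - 1, too many. *)
Lemma subgroup_size_neq0 p M :
  p \in [pchar L] -> finite_mult_subgroup M -> (size M)%:R != 0 :> L.
Proof.
move=> pch subM; apply/negP => /eqP sizeM0.
have := dvdn_pcharf pch (size M); rewrite sizeM0 eqxx => /dvdnP [m' sizeME].
have p1 := prime_gt1 (pcharf_prime pch).
have [uniqM _ oneM _ _] := subM.
have sizeM_gt0 : (0 < size M)%N by case: (M) oneM.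
have m'_gt0 : (0 < m')%N by move: sizeM_gt0; rewrite sizeME muln_gt0 => /andP[].
have rootsM : all (root ('X^m' - 1%:P)) M.
  apply/allP => x xM; rewrite /root !hornerE subr_eq0; apply/eqP.
  by apply: (@pchar_exp_eq1 p _ pch); rewrite -exprM -sizeME (@subgroup_exp_size M x).
have nz : ('X^m' - 1%:P : {poly L}) != 0.
  by rewrite -size_poly_eq0 size_XnsubC.
have := max_poly_roots nz rootsM uniqM.
by rewrite size_XnsubC // ltnS sizeME leqNgt (ltn_Pmulr p1 m'_gt0).
Qed.

(* A geometric sequence of ratio b presenting a group M (containing 1) presents
   exactly the powers of b: b has order |M| and s 0 is itself a power of b. *)
Lemma geometric_presents_cyclic_gen (b : L) s M :
  (1 \in M) -> presents s M -> (forall n, s (n + 1) = b * s n) ->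
  forall x, x \in M <-> in_cyclic_gen b x.
Proof.
move=> oneM [per _ memM] geo.
have sE := @geometric_natE L b s geo.
have := oneM; rewrite memM => /mapP [j]; rewrite mem_iota add0n => /andP [_ jM] one_j.
have s00 : s 0 != 0.
  by apply: contra_eq_neq one_j; rewrite sE => ->; rewrite mulr0 oner_neq0.
have bM : b ^+ size M = 1.
  by apply: (mulIf s00); rewrite mul1r -sE -(per 0) add0r.
have s0E : s 0 = b ^+ (size M - j).
  by rewrite -[RHS]mulr1 one_j sE mulrA -exprD subnK ?bM ?mul1r // ltnW.
move=> x; split.
  by rewrite memM => /mapP [i _ ->]; rewrite sE s0E -exprD; eexists.
case=> n ->; rewrite -[b ^+ n]mulr1 one_j sE mulrA -exprD -(expr_mod _ bM) -sE.
rewrite memM; apply/mapP; exists ((n + j) %% size M)%N => //.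
by rewrite mem_iota add0n ltn_pmod // (leq_ltn_trans _ jM).
Qed.

End FiniteSubgroups.

Theorem mainTheorem6 (F : finFieldType) (a : F) (k : nat)
    (L : fieldType) (iota : {rmorphism F -> L}) (M : seq L) :
  a != 0 -> (0 < k)%N ->
  let f := map_poly iota (('X - a%:P) ^+ k) in
  f_subgroup f M ->
  (forall x, x \in M <-> in_cyclic_gen (iota a) x) /\
  standard_subgroup f M /\
  (forall s : int -> L, is_f_seq f s -> presents s M ->
     forall n : int, s (n + 1) = iota a * s n).
Proof.
move=> a0 k0 f [subM [s0 [fs0 pres0]]].
have b0 : iota a != 0 by rewrite fmorph_eq0.
have fE : f = ('X - (iota a)%:P) ^+ k.
  by rewrite /f rmorphXn rmorphB /= map_polyX map_polyC.
have [p _ pch] := finPcharP F.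
have sizeM0 := @subgroup_size_neq0 L p M (rmorph_pchar iota pch) subM.
have geo s : is_f_seq f s -> presents s M -> forall n, s (n + 1) = iota a * s n.
  move=> fs [per _ _]; rewrite fE in fs.
  exact: periodic_XsubC_exp_geometric b0 sizeM0 k0 per fs.
have [_ _ oneM _ _] := subM.
split; first exact: geometric_presents_cyclic_gen oneM pres0 (geo s0 fs0 pres0).
split=> //; split=> [|s fs pres]; first by split=> //; exists s0.
by exists (iota a); apply: geo.
Qed.
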